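(* Let $\alpha$ be a graph function on a strongly connected digraph $G$, and let $r,s$ be raising vectors obtained from $\alpha$ via two (possibly different) finite sequences of raising operations. Suppose $r\le s$ coordinatewise, and let $r',s'$ be the raising vectors obtained from $r,s$ respectively after one additional raising operation at a common vertex $v$. Then $r'\le s'$.
   Context: $G$ is a strongly connected directed graph (self-loops allowed); a graph function assigns a real weight $\alpha_{uv}$ to each edge. For a graph function $\beta$, $\beta_v^{\text{in}}=\max_{u:(u,v)\in G}\beta_{uv}$, $\beta_v^{\text{out}}=\max_{w:(v,w)\in G}\beta_{vw}$, $\rho^R_v=\max\{0,\beta_v^{\text{out}}-\beta_v^{\text{in}}\}$. A raising operation at $v$: if $\rho^R_v>0$, add $\rho^R_v/2$ to each $\beta_{uv}$ ($u\ne v$) and subtract it from each $\beta_{vw}$ ($w\ne v$); otherwise do nothing. The raising vector of a sequence of raising operations starting at $\alpha$ starts at $0$ and, at each operation at vertex $v$, increases its $v$-coordinate by the current $\rho^R_v/2$; the current graph function is then $\beta_{uv}=\alpha_{uv}+r_v-r_u$ where $r$ is the current raising vector. *)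

From mathcomp Require Import all_boot all_order all_algebra.
Set Implicit Arguments. Unset Strict Implicit. Unset Printing Implicit Defensive.
Import Order.TTheory GRing.Theory Num.Theory.
Local Open Scope ring_scope.

Definition strongly_connected (V : finType) (G : rel V) : Prop :=
  forall x y : V, connect G x y.

(* maximum of f over the (finite) set P; 0 if P is empty (never used for
   the nonempty in/out neighbourhoods of a strongly connected graph with
   at least two vertices). *)
Definition bmax (V : finType) (R : realFieldType) (P : pred V) (f : V -> R) : R :=
  match [pick u | P u] with
  | Some u0 => \big[Num.max/f u0]_(u | P u) f u
  | None => 0
  end.

Definition cur (V : finType) (R : realFieldType) (alpha : V -> V -> R)
  (r : V -> R) (u w : V) : R := alpha u w + r w - r u.

Definition beta_in (V : finType) (R : realFieldType) (G : rel V)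
  (alpha : V -> V -> R) (r : V -> R) (v : V) : R :=
  bmax (fun u => G u v) (fun u => cur alpha r u v).

Definition beta_out (V : finType) (R : realFieldType) (G : rel V)
  (alpha : V -> V -> R) (r : V -> R) (v : V) : R :=
  bmax (fun w => G v w) (fun w => cur alpha r v w).

Definition rhoR (V : finType) (R : realFieldType) (G : rel V)
  (alpha : V -> V -> R) (r : V -> R) (v : V) : R :=
  Num.max 0 (beta_out G alpha r v - beta_in G alpha r v).

Definition raise (V : finType) (R : realFieldType) (G : rel V)
  (alpha : V -> V -> R) (v : V) (r : V -> R) : V -> R :=
  fun x => if x == v then r x + rhoR G alpha r v / 2 else r x.

Definition raising_vector (V : finType) (R : realFieldType) (G : rel V)
  (alpha : V -> V -> R) (s : seq V) : V -> R :=
  foldl (fun r v => raise G alpha v r) (fun _ => 0) s.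

From mathcomp Require Import all_boot all_order all_algebra.
From mathcomp Require Import lra.

Set Implicit Arguments.
Unset Strict Implicit.
Unset Printing Implicit Defensive.
Import Order.TTheory GRing.Theory Num.Theory.
Local Open Scope ring_scope.

(* Writing [o = beta_out r v + r v = max_w (alpha v w + r w)] and
   [i = beta_in r v - r v = max_u (alpha u v - r u)], the raised coordinate is
   [max (r v, (o - i) / 2)].  Here [o] is nondecreasing and [i] nonincreasing
   in [r], so a raising operation preserves the coordinatewise order of
   raising vectors. *)

(* [a <= b] covers an empty [P], where [bmax] is the junk value [0]. *)
Lemma bmax_shift (V : finType) (R : realFieldType) (P : pred V)
    (f g : V -> R) (a b : R) :
  (forall u, P u -> f u + a <= g u + b) -> a <= b ->
  bmax P f + a <= bmax P g + b.
Proof.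
move=> fg ab; rewrite /bmax; case: pickP => [u0 Pu0|_]; last by rewrite !add0r.
apply: (big_ind2 (fun x y => x + a <= y + b)) => [|x1 x2 y1 y2 le1 le2|u Pu].
- exact: fg.
- by case: (leP x1 y1); case: (leP x2 y2); lra.
- exact: fg.
Qed.

Section RaiseMonotone.

Variables (V : finType) (R : realFieldType) (G : rel V) (alpha : V -> V -> R).
Variables (r s : V -> R) (v : V).
Hypothesis le_rs : forall x, r x <= s x.

Lemma beta_out_addr_le :
  beta_out G alpha r v + r v <= beta_out G alpha s v + s v.
Proof.
apply: bmax_shift => // w _; rewrite /cur.
by have := le_rs w; have := le_rs v; lra.
Qed.

Lemma beta_in_subr_le :
  beta_in G alpha s v - s v <= beta_in G alpha r v - r v.
Proof.
apply: bmax_shift => [u _|]; rewrite /cur.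
  by have := le_rs u; have := le_rs v; lra.
by have := le_rs v; lra.
Qed.

End RaiseMonotone.

Lemma raise_at (V : finType) (R : realFieldType) (G : rel V)
    (alpha : V -> V -> R) (r : V -> R) (v : V) :
  raise G alpha v r v = Num.max (r v)
    (((beta_out G alpha r v + r v) - (beta_in G alpha r v - r v)) / 2).
Proof.
rewrite /raise eqxx /rhoR.
set o := beta_out _ _ _ _; set i := beta_in _ _ _ _.
rewrite /Num.max; case: (ltrP 0 (o - i)) => oi; case: ltrP; lra.
Qed.

Lemma raise_monotone (V : finType) (R : realFieldType) (G : rel V)
    (alpha : V -> V -> R) (r s : V -> R) (v : V) :
  (forall x, r x <= s x) ->
  forall x, raise G alpha v r x <= raise G alpha v s x.
Proof.
move=> le_rs x; case: (eqVneq x v) => [->|xv]; last by rewrite /raise (negPf xv).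
rewrite !raise_at; apply: le_max2 => //.
have := beta_out_addr_le G alpha v le_rs.
have := beta_in_subr_le G alpha v le_rs; lra.
Qed.

Theorem lemma2 (V : finType) (R : realFieldType) (G : rel V)
  (alpha : V -> V -> R) (hG : strongly_connected G)
  (s1 s2 : seq V) (v : V) :
  (forall x, raising_vector G alpha s1 x <= raising_vector G alpha s2 x) ->
  forall x, raise G alpha v (raising_vector G alpha s1) x
            <= raise G alpha v (raising_vector G alpha s2) x.
Proof. exact: raise_monotone. Qed.
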